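(* There exists an $\mathrm{RDCQS}(8^{4}:2)$.
   Context: A candelabra quadruple system $\mathrm{CQS}(g^n:s)$ is a quadruple $(X,S,\mathcal{G},\mathcal{A})$ where $S\subseteq X$ with $|S|=s$ (the stem), $\mathcal{G}$ is a partition of $X\setminus S$ into $n$ groups of size $g$, and $\mathcal{A}$ is a set of $4$-subsets of $X$ such that every $3$-subset of $X$ not contained in $S\cup G$ for any $G\in\mathcal{G}$ lies in exactly one block, while no $3$-subset of any $S\cup G$ lies in a block. For $x\in X$ let $\mathcal{A}_x=\{A\setminus\{x\}:x\in A\in\mathcal{A}\}$. A parallel class (PC) of a set $Y$ is a set of pairwise disjoint blocks whose union is $Y$. An incomplete Kirkman triple system $\mathrm{KTS}(v,h)$ is a triple $(Y,H,\mathcal{B})$ with $|Y|=v$, $H\subseteq Y$, $|H|=h$, $\mathcal{B}$ a set of $3$-subsets such that each pair of $Y$ not contained in $H$ lies in exactly one block and no pair inside $H$ lies in a block, and $\mathcal{B}$ partitions into $\frac{v-h}{2}$ PCs of $Y$ and $\frac{h-1}{2}$ PCs of $Y\setminus H$. A Kirkman frame $\mathrm{KF}(g^n)$ on a set $Z$ with a partition $\mathcal{G}$ into $n$ groups of size $g$ is a set of $3$-subsets, each meeting every group in at most one point, such that every pair of points from distinct groups lies in exactly one block, and whose blocks can be partitioned into classes each being a PC of $Z\setminus G$ for some $G\in\mathcal{G}$. An $\mathrm{RDCQS}(g^n:s)$ is a $\mathrm{CQS}(g^n:s)$ such that for each $x\in G\in\mathcal{G}$, $(X\setminus\{x\},(G\cup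 S)\setminus\{x\},\mathcal{A}_x)$ is a $\mathrm{KTS}(gn+s-1,g+s-1)$, and for each $x\in S$, $\mathcal{A}_x$ is a $\mathrm{KF}(g^n)$ on $X\setminus S$ with group set $\mathcal{G}$. *)

From mathcomp Require Import all_boot.
Set Implicit Arguments. Unset Strict Implicit. Unset Printing Implicit Defensive.

Section Designs.
Variable T : finType.

Definition is_PC (C : {set {set T}}) (Z : {set T}) : bool :=
  trivIset C && (cover C == Z).

Definition nblocks (B : {set {set T}}) (p : {set T}) : nat :=
  #|[set b in B | p \subset b]|.

Definition derived (A : {set {set T}}) (x : T) : {set {set T}} :=
  [set b :\ x | b in A & x \in b].

Definition is_CQS (g n s : nat) (S : {set T}) (G : {set {set T}})
    (A : {set {set T}}) : Prop :=
  [/\ #|S| = s,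
      partition G (~: S),
      #|G| = n /\ (forall Gr, Gr \in G -> #|Gr| = g),
      (forall b, b \in A -> #|b| = 4) &
      (forall t : {set T}, #|t| = 3 ->
         if [exists Gr in G, t \subset S :|: Gr]
         then nblocks A t = 0
         else nblocks A t = 1)].

Definition is_IKTS (v h : nat) (Y H : {set T}) (B : {set {set T}}) : Prop :=
  [/\ #|Y| = v, H \subset Y /\ #|H| = h,
      (forall b, b \in B -> (b \subset Y) /\ #|b| = 3),
      (forall p : {set T}, p \subset Y -> #|p| = 2 ->
         if p \subset H then nblocks B p = 0 else nblocks B p = 1) &
      exists P : {set {set {set T}}},
        [/\ partition P B,
            (forall C, C \in P -> is_PC C Y \/ is_PC C (Y :\: H)),
            #|[set C in P | is_PC C Y]| = (v - h) %/ 2 &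
            #|[set C in P | is_PC C (Y :\: H)]| = (h - 1) %/ 2]].

Definition is_KF (g n : nat) (Z : {set T}) (G : {set {set T}})
    (B : {set {set T}}) : Prop :=
  [/\ partition G Z, #|G| = n /\ (forall Gr, Gr \in G -> #|Gr| = g),
      (forall b, b \in B ->
         [/\ b \subset Z, #|b| = 3 &
             forall Gr, Gr \in G -> #|b :&: Gr| <= 1]),
      (forall x y, x \in Z -> y \in Z ->
         ~~ [exists Gr in G, (x \in Gr) && (y \in Gr)] ->
         nblocks B [set x; y] = 1) &
      exists P : {set {set {set T}}},
        partition P B /\
        (forall C, C \in P -> exists2 Gr, Gr \in G & is_PC C (Z :\: Gr))].

Definition is_RDCQS (g n s : nat) (S : {set T}) (G : {set {set T}})
    (A : {set {set T}}) : Prop :=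
  [/\ is_CQS g n s S G A,
      (forall Gr x, Gr \in G -> x \in Gr ->
         is_IKTS (g * n + s - 1) (g + s - 1) ([set: T] :\ x)
                 ((Gr :|: S) :\ x) (derived A x)) &
      (forall x, x \in S -> is_KF g n (~: S) G (derived A x))].

End Designs.

From mathcomp Require Import all_boot.
Set Implicit Arguments. Unset Strict Implicit. Unset Printing Implicit Defensive.

(* The points are Z_32 together with the stem {32, 33}; the groups are the residue classes
   mod 4 and the blocks are the orbits of 43 base blocks under y |-> y + 1 (mod 32), which
   fixes the stem.  Every pair {y, z} of a derived system A_x lies in exactly as many blocks
   as the triple {x, y, z} of A, so all axioms of a KTS or Kirkman frame on A_x except the
   resolvability follow from the CQS axioms alone.  What is left is the CQS triple condition
   and explicit resolutions: at x in Z_32 the translate by x of a resolution at 0, at 32 the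
   translates by 0..7 of two parallel classes, and at 33 the image of the latter under
   y |-> -y, which together with swapping 32 and 33 is an automorphism of the design.  These
   finite facts are checked by evaluation on lists of natural numbers. *)

Section SetSystems.
Variable T : finType.

Lemma card_set_seq_pred (X : finType) (s : seq X) (Q : pred X) :
  uniq s -> #|[set x in [set:: s] | Q x]| = count Q s.
Proof.
move=> us; rewrite -size_filter -(card_uniqP _) ?filter_uniq //.
by apply: eq_card => x; rewrite !inE mem_filter andbC.
Qed.

Definition sets_of (s : seq (seq T)) : {set {set T}} := [set:: [seq [set:: b] | b <- s]].

Lemma uniq_flatten_eq (s : seq (seq T)) b1 b2 x :
  uniq (flatten s) -> b1 \in s -> b2 \in s -> x \in b1 -> x \in b2 -> b1 = b2.
Proof.
elim: s => //= b s IHs; rewrite cat_uniq => /and3P[_ bNs us].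
have xNs y : y \in b -> y \in flatten s -> False.
  by move=> yb ys; case/hasP: bNs; exists y.
rewrite !inE => /predU1P[-> | b1s] /predU1P[-> | b2s] // x1 x2.
- by case: (xNs x) => //; apply/flattenP; exists b2.
- by case: (xNs x) => //; apply/flattenP; exists b1.
- exact: IHs.
Qed.

Lemma cover_sets_of (s : seq (seq T)) : cover (sets_of s) = [set:: flatten s].
Proof.
apply/setP => x; rewrite inE; apply/bigcupP/flattenP => [[B] | [b bs xb]].
  by rewrite inE => /mapP[b bs ->]; rewrite inE; exists b.
by exists [set:: b]; rewrite inE ?map_f.
Qed.

Lemma trivIset_sets_of (s : seq (seq T)) : uniq (flatten s) -> trivIset (sets_of s).
Proof.
move=> us; apply/trivIsetP => B1 B2; rewrite !inE => /mapP[b1 b1s ->] /mapP[b2 b2s ->].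
apply: contraR; rewrite -setI_eq0 => /set0Pn[x]; rewrite !inE => /andP[x1 x2].
by rewrite (uniq_flatten_eq us b1s b2s x1 x2).
Qed.

Lemma uniq_sets_of (s : seq (seq T)) :
  uniq (flatten s) -> [::] \notin s -> uniq [seq [set:: b] | b <- s].
Proof.
elim: s => //= b s IHs; rewrite cat_uniq inE negb_or => /and3P[_ bNs us] /andP[bn sn].
rewrite IHs // andbT; apply/mapP => -[b' b's eq_bb'].
case: b bn bNs eq_bb' => // x b _ /negP bNs /setP/(_ x)/esym.
rewrite !inE eqxx => xb'; apply: bNs; apply/hasP; exists x; last exact: mem_head.
by apply/flattenP; exists b'.
Qed.

Lemma partition_sets_of (s : seq (seq T)) :
  uniq (flatten s) -> [::] \notin s -> partition (sets_of s) [set:: flatten s].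
Proof.
move=> us sn; apply/and3P; split; rewrite ?cover_sets_of ?trivIset_sets_of //.
rewrite inE; apply/mapP => -[[|x b] bs]; first by rewrite bs in sn.
by move/setP/(_ x); rewrite !inE eqxx.
Qed.

Lemma card_sets_of (s : seq (seq T)) :
  uniq (flatten s) -> [::] \notin s -> #|sets_of s| = size s.
Proof. by move=> us sn; rewrite cardsE (card_uniqP _) ?size_map ?uniq_sets_of. Qed.

Lemma card_sets_of_pred (s : seq (seq T)) (Q : pred {set T}) :
  uniq (flatten s) -> [::] \notin s ->
  #|[set C in sets_of s | Q C]| = count (fun b => Q [set:: b]) s.
Proof. by move=> us sn; rewrite /sets_of card_set_seq_pred ?count_map ?uniq_sets_of. Qed.

Lemma card_set3 (x y z : T) : x != y -> x != z -> y != z -> #|x |: [set y; z]| = 3.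
Proof. by move=> xy xz yz; rewrite cardsU1 cards2 !inE negb_or xy xz yz. Qed.

Lemma card3_triple (t : {set T}) : #|t| = 3 ->
  exists a b c, [/\ a != b, a != c, b != c & t = [set:: [:: a; b; c]]].
Proof.
move=> t3; have : t = [set:: enum t] by apply/setP => i; rewrite inE mem_enum.
have : size (enum t) = 3 by rewrite -cardE.
have := enum_uniq (mem t).
case: (enum t) => [|a [|b [|c [|d e]]]] //= + _.
by rewrite !inE !negb_or => /and3P[/andP[ab ac] bc _] ->; exists a, b, c.
Qed.

Lemma nblocks_derived (A : {set {set T}}) x (p : {set T}) :
  x \notin p -> nblocks (derived A x) p = nblocks A (x |: p).
Proof.
move=> xNp; rewrite /nblocks /derived.
set F := [set B in A | x |: p \subset B].
have -> : [set b in [set B :\ x | B in A & x \in B] | p \subset b] = [set B :\ x | B in F].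
  apply/setP => b; rewrite inE; apply/andP/imsetP => [[/imsetP[B] + -> pB] | [B]].
    rewrite inE => /andP[AB xB]; exists B => //.
    by rewrite inE AB subUset sub1set xB; move: pB; rewrite subsetD1 => /andP[].
  rewrite inE subUset sub1set => /and3P[AB xB pB] ->; split; last by rewrite subsetD1 pB.
  by apply/imsetP; exists B; rewrite ?inE ?AB.
rewrite card_in_imset // => B1 B2; rewrite !inE !subUset !sub1set.
by move=> /and3P[_ xB1 _] /and3P[_ xB2 _] eqB; rewrite -(setD1K xB1) eqB setD1K.
Qed.

End SetSystems.

Section ResolvableDerivedSystems.
Variables (T : finType) (g n s : nat) (S : {set T}) (G A : {set {set T}}).

Definition KTS_resolution (v h : nat) (Y H : {set T}) (B : {set {set T}})
    (P : {set {set {set T}}}) : Prop :=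
  [/\ partition P B,
      (forall C, C \in P -> is_PC C Y \/ is_PC C (Y :\: H)),
      #|[set C in P | is_PC C Y]| = (v - h) %/ 2 &
      #|[set C in P | is_PC C (Y :\: H)]| = (h - 1) %/ 2].

Definition KF_resolution (Z : {set T}) (B : {set {set T}}) (P : {set {set {set T}}}) :=
  partition P B /\ (forall C, C \in P -> exists2 Gr, Gr \in G & is_PC C (Z :\: Gr)).

Hypothesis cqsA : is_CQS g n s S G A.

Let partG : partition G (~: S). Proof. by case: cqsA. Qed.

Lemma group_notin_stem Gr x : Gr \in G -> x \in Gr -> x \notin S.
Proof.
move=> GGr xGr; have /and3P[/eqP coverG _ _] := partG.
by rewrite -in_setC -coverG; apply/bigcupP; exists Gr.
Qed.

Lemma group_of_point Gr1 Gr2 x :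
  Gr1 \in G -> Gr2 \in G -> x \in Gr1 -> x \in Gr2 -> Gr1 = Gr2.
Proof.
have /and3P[_ tIG _] := partG.
by move=> G1 G2 x1 x2; rewrite -(def_pblock tIG G1 x1) (def_pblock tIG G2 x2).
Qed.

Lemma triple_forbidden_nblocks (t : {set T}) :
  #|t| = 3 -> [exists Gr in G, t \subset S :|: Gr] -> nblocks A t = 0.
Proof. by case: cqsA => _ _ _ _ triple /triple + forb; rewrite forb. Qed.

Lemma triple_allowed_nblocks (t : {set T}) :
  #|t| = 3 -> ~~ [exists Gr in G, t \subset S :|: Gr] -> nblocks A t = 1.
Proof. by case: cqsA => _ _ _ _ triple /triple + allowed; rewrite (negbTE allowed). Qed.

Lemma block_triple_allowed B (t : {set T}) :
  B \in A -> t \subset B -> #|t| = 3 -> ~~ [exists Gr in G, t \subset S :|: Gr].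
Proof.
move=> AB tB t3; apply/negP => /(triple_forbidden_nblocks t3)/eqP.
by rewrite cards_eq0 => /eqP/setP/(_ B); rewrite !inE AB tB.
Qed.

Lemma card_points : #|[set: T]| = g * n + s.
Proof.
case: cqsA => S_s _ [G_n G_g] _ _.
rewrite cardsT -(cardsC S) S_s (card_partition partG) addnC.
by rewrite (eq_bigr (fun=> g)) ?sum_nat_const ?G_n 1?mulnC.
Qed.

Lemma derived_block x (b : {set T}) : b \in derived A x ->
  exists2 B, B \in A & [/\ x \in B, b = B :\ x & #|b| = 3].
Proof.
case/imsetP=> B; rewrite inE => /andP[AB xB] ->; exists B => //.
case: cqsA => _ _ _ /(_ B AB) B4 _.
by split=> //; move: B4; rewrite (cardsD1 x) xB => -[].
Qed.

Lemma nblocks_derived_group Gr x (p : {set T}) :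
  Gr \in G -> x \in Gr -> x \notin p -> #|p| = 2 ->
  nblocks (derived A x) p = if p \subset (Gr :|: S) :\ x then 0 else 1.
Proof.
move=> GGr xGr xNp p2; rewrite nblocks_derived //.
have t3 : #|x |: p| = 3 by rewrite cardsU1 xNp p2.
suff -> : (p \subset (Gr :|: S) :\ x) = [exists Gr' in G, x |: p \subset S :|: Gr'].
  by case: ifP; [apply: triple_forbidden_nblocks | move/negbT; apply: triple_allowed_nblocks].
rewrite subsetD1 xNp andbT; apply/idP/existsP => [pGS | [Gr' /andP[GGr']]].
  by exists Gr; rewrite GGr subUset sub1set !inE xGr orbT setUC.
rewrite subUset sub1set inE (negbTE (group_notin_stem GGr xGr)) /= => /andP[xGr'].
by rewrite (group_of_point GGr GGr' xGr xGr') setUC.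
Qed.

Lemma stem_triple_forbidden x y z : 0 < n -> x \in S -> y \in S ->
  [exists Gr in G, x |: [set y; z] \subset S :|: Gr].
Proof.
move=> n_gt0 xS yS.
have [Gr GGr zGr] : exists2 Gr, Gr \in G & z \in S :|: Gr.
  have [zS | zNS] := boolP (z \in S).
    case: cqsA => _ _ [G_n _] _ _.
    have /card_gt0P[Gr GGr] : 0 < #|G| by rewrite G_n.
    by exists Gr; rewrite // inE zS.
  have /and3P[/eqP coverG _ _] := partG.
  have /bigcupP[Gr GGr zGr] : z \in cover G by rewrite coverG inE.
  by exists Gr; rewrite // inE zGr orbT.
by apply/existsP; exists Gr; rewrite GGr !subUset !sub1set zGr !inE xS yS.
Qed.

Lemma derived_stem_block x b : 0 < n -> x \in S -> b \in derived A x ->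
  [/\ b \subset ~: S, #|b| = 3 & forall Gr, Gr \in G -> #|b :&: Gr| <= 1].
Proof.
move=> n_gt0 xS /derived_block[B AB [xB -> b3]].
have allowed y z : y \in B :\ x -> z \in B :\ x -> y != z ->
    ~~ [exists Gr in G, x |: [set y; z] \subset S :|: Gr].
  move=> /setD1P[yx yB] /setD1P[zx zB] yz; apply: (block_triple_allowed AB).
    by rewrite !subUset !sub1set xB yB zB.
  by rewrite card_set3 // eq_sym.
split=> // [|Gr GGr].
  apply/subsetP => y yb; rewrite inE; apply/negP => yS.
  have [z zb] : exists z, z \in B :\ x :\ y.
    by apply/card_gt0P; move: b3; rewrite (cardsD1 y) yb add1n => -[->].
  have /setD1P[zy {}zb] := zb.
  have yz : y != z by rewrite eq_sym.
  by case/negP: (allowed y z yb zb yz); exact: stem_triple_forbidden.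
rewrite leqNgt; apply/negP => /card_gt1P[y [z [/setIP[yb yGr] /setIP[zb zGr] yz]]].
case/negP: (allowed y z yb zb yz); apply/existsP; exists Gr.
by rewrite GGr !subUset !sub1set !inE xS yGr zGr !orbT.
Qed.

Lemma nblocks_derived_stem x y z : x \in S -> y \in ~: S -> z \in ~: S ->
  ~~ [exists Gr in G, (y \in Gr) && (z \in Gr)] -> nblocks (derived A x) [set y; z] = 1.
Proof.
rewrite !inE => xS yNS zNS noGr.
have /and3P[/eqP coverG _ _] := partG.
have /bigcupP[Gr GGr yGr] : y \in cover G by rewrite coverG inE.
have yz : y != z by apply: contraNneq noGr => <-; apply/existsP; exists Gr; rewrite GGr yGr.
have xy : x != y by apply: contraTneq xS => ->.
have xz : x != z by apply: contraTneq xS => ->.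
rewrite nblocks_derived ?inE ?negb_or ?xy ?xz //.
apply: triple_allowed_nblocks; first by rewrite card_set3.
apply: contra noGr => /existsP[Gr' /andP[GGr']].
rewrite !subUset !sub1set !inE (negbTE yNS) (negbTE zNS) /= => /and3P[_ yGr' zGr'].
by apply/existsP; exists Gr'; rewrite GGr' yGr' zGr'.
Qed.

Lemma card_group_stem Gr : Gr \in G -> #|Gr :|: S| = g + s.
Proof.
case: cqsA => S_s _ [_ G_g] _ _ GGr; rewrite cardsU G_g // S_s.
suff -> : Gr :&: S = set0 by rewrite cards0 subn0.
by apply/setP => y; rewrite !inE; apply/andP => -[/(group_notin_stem GGr)/negP].
Qed.

Theorem RDCQS_of_resolutions : 0 < n ->
  (forall Gr x, Gr \in G -> x \in Gr -> exists P,
     KTS_resolution (g * n + s - 1) (g + s - 1) ([set: T] :\ x) ((Gr :|: S) :\ x)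
       (derived A x) P) ->
  (forall x, x \in S -> exists P, KF_resolution (~: S) (derived A x) P) ->
  is_RDCQS g n s S G A.
Proof.
move=> n_gt0 kts kf; split=> // [Gr x GGr xGr | x xS].
  split; last exact: kts.
  - by rewrite -card_points (cardsD1 x [set: T]) inE add1n subn1.
  - split; first exact/setSD/subsetT.
    by rewrite -(card_group_stem GGr) (cardsD1 x (Gr :|: S)) inE xGr add1n subn1.
  - by move=> b /derived_block[B _ [_ -> b3]]; split=> //; apply/setSD/subsetT.
  - move=> p pY p2; have xNp : x \notin p.
      by apply/negP => /(subsetP pY); rewrite !inE eqxx.
    by rewrite (nblocks_derived_group GGr xGr xNp p2); case: (p \subset _).
split; last exact: kf.
- exact: partG.
- by case: cqsA.
- by move=> b; apply: derived_stem_block.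
- by move=> y z; apply: nblocks_derived_stem.
Qed.

End ResolvableDerivedSystems.

Section NatEncoding.
Variable n : nat.

(* Entries of [l] that are not below [n] are ignored. *)
Definition pts (l : seq nat) : {set 'I_n} := [set:: pmap insub l].

Definition sorted_below : pred (seq nat) := fun l => sorted ltn l && all (fun k => k < n) l.

Definition design (s : seq (seq nat)) : {set {set 'I_n}} := [set:: map pts s].

Definition derived_seq (s : seq (seq nat)) (x : nat) : seq (seq nat) :=
  [seq [seq k <- b | k != x] | b <- s & x \in b].

Definition compl (l : seq nat) : seq nat := [seq k <- iota 0 n | k \notin l].

Definition covers (c : seq (seq nat)) (l : seq nat) : bool :=
  all (fun k => (k \in flatten c) == (k \in l)) (iota 0 n).

Definition resolves (rs : seq (seq (seq nat))) (s : seq (seq nat)) : bool :=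
  [&& perm_eq (flatten rs) s, uniq (flatten rs),
      all sorted_below (flatten rs),
      [::] \notin rs & all (fun c => uniq (flatten c)) rs].

Lemma in_pts i l : (i \in pts l) = (val i \in l).
Proof. by rewrite inE mem_pmap_sub. Qed.

Lemma card_pts l : uniq l -> all (fun k => k < n) l -> #|pts l| = size l.
Proof.
move=> ul ln; rewrite cardsE (card_uniqP _) ?pmap_sub_uniq // size_pmap_sub.
by apply/eqP; rewrite -all_count.
Qed.

Lemma pts_cat l1 l2 : pts (l1 ++ l2) = pts l1 :|: pts l2.
Proof. by apply/setP => i; rewrite in_setU !in_pts mem_cat. Qed.

Lemma pts_compl l : pts (compl l) = ~: pts l.
Proof.
by apply/setP => i; rewrite in_setC !in_pts mem_filter mem_iota leq0n add0n ltn_ord !andbT.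
Qed.

Lemma pts1 (x : 'I_n) : pts [:: val x] = [set x].
Proof. by apply/setP => i; rewrite in_pts in_set1 mem_seq1 val_eqE. Qed.

Lemma eq_pts l1 l2 : (pts l1 == pts l2) = all (fun k => (k \in l1) == (k \in l2)) (iota 0 n).
Proof.
apply/eqP/allP => [eq12 k | eq12].
  rewrite mem_iota leq0n add0n /= => kn.
  by move/setP/(_ (Ordinal kn)): eq12; rewrite !in_pts => ->.
by apply/setP => i; rewrite !in_pts; apply/eqP/eq12; rewrite mem_iota leq0n add0n ltn_ord.
Qed.

Lemma sub_pts (t : seq 'I_n) l : ([set:: t] \subset pts l) = all (fun i => val i \in l) t.
Proof.
apply/subsetP/allP => sub i; first by rewrite -in_pts => it; rewrite sub ?inE.
by rewrite inE in_pts; apply: sub.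
Qed.

Lemma pts_inj : {in sorted_below &, injective pts}.
Proof.
move=> l1 l2 /andP[s1 b1] /andP[s2 b2] eq12.
apply: (irr_sorted_eq ltn_trans ltnn) => // k.
have sub l l' : all (fun k => k < n) l -> pts l = pts l' -> k \in l -> k \in l'.
  move=> bl eq kl; have kn : k < n := allP bl k kl.
  by move/setP/(_ (Ordinal kn)): eq; rewrite !in_pts kl => <-.
by apply/idP/idP; [exact: sub | exact: sub b2 (esym eq12)].
Qed.

Lemma design_perm s1 s2 : perm_eq s1 s2 -> design s1 = design s2.
Proof. by move=> eq12; apply/setP => B; rewrite !inE (perm_mem (perm_map pts eq12)). Qed.

Lemma derived_design s x : derived (design s) x = design (derived_seq s (val x)).
Proof.
apply/setP => b; rewrite !inE; apply/imsetP/mapP => [[B] | [l]].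
  rewrite !inE => /andP[/mapP[l ls ->] xl] ->.
  exists [seq k <- l | k != val x]; first by rewrite map_f // mem_filter -in_pts xl.
  by apply/setP => i; rewrite in_setD1 !in_pts mem_filter val_eqE.
case/mapP=> l0; rewrite mem_filter => /andP[xl ls] -> ->.
exists (pts l0); first by rewrite inE in_pts xl andbT inE map_f.
by apply/setP => i; rewrite in_setD1 !in_pts mem_filter val_eqE.
Qed.

Lemma design_sets_of s : design s = sets_of [seq pmap insub b | b <- s].
Proof. by rewrite /sets_of -map_comp. Qed.

Lemma flatten_pmap_sub s :
  flatten [seq pmap insub b | b <- s] = pmap insub (flatten s) :> seq 'I_n.
Proof. by elim: s => //= b s ->; rewrite pmap_cat. Qed.

Lemma coversE c l : covers c l = (pts (flatten c) == pts l).
Proof. by rewrite eq_pts. Qed.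

Lemma is_PC_design c l : uniq (flatten c) -> is_PC (design c) (pts l) = covers c l.
Proof.
move=> uc; rewrite /is_PC design_sets_of trivIset_sets_of; last first.
  by rewrite flatten_pmap_sub pmap_sub_uniq.
by rewrite cover_sets_of flatten_pmap_sub -/(pts _) coversE.
Qed.

Lemma nil_notin_pmap_sub (s : seq (seq nat)) :
  [::] \notin s -> all (all (fun k => k < n)) s ->
  [::] \notin ([seq pmap insub b | b <- s] : seq (seq 'I_n)).
Proof.
move=> sn sb; apply/mapP => -[b bs /(congr1 size)]; rewrite size_pmap_sub.
have /eqP -> : count (fun k => k < n) b == size b by rewrite -all_count (allP sb).
by move/esym/eqP; rewrite size_eq0 => /eqP b0; rewrite -b0 bs in sn.
Qed.

Lemma partition_design s : uniq (flatten s) -> [::] \notin s ->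
  all (all (fun k => k < n)) s -> partition (design s) (pts (flatten s)).
Proof.
move=> us sn sb; rewrite design_sets_of /pts -flatten_pmap_sub.
by apply: partition_sets_of; rewrite ?flatten_pmap_sub ?pmap_sub_uniq ?nil_notin_pmap_sub.
Qed.

Lemma card_design s : uniq (flatten s) -> [::] \notin s ->
  all (all (fun k => k < n)) s -> #|design s| = size s.
Proof.
move=> us sn sb; rewrite design_sets_of card_sets_of ?size_map //.
  by rewrite flatten_pmap_sub pmap_sub_uniq.
exact: nil_notin_pmap_sub.
Qed.

Lemma nblocks_design s p : uniq s -> all sorted_below s ->
  nblocks (design s) p = count (fun b => p \subset pts b) s.
Proof.
move=> us gs; rewrite /nblocks card_set_seq_pred ?count_map // map_inj_in_uniq //.
by apply: sub_in2 pts_inj => l /(allP gs).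
Qed.

Lemma resolution_sets_of rs : [set:: map design rs] = sets_of [seq map pts c | c <- rs].
Proof. by rewrite /sets_of -map_comp. Qed.

Lemma uniq_flatten_resolution rs s : resolves rs s -> uniq (flatten [seq map pts c | c <- rs]).
Proof.
case/and5P=> _ urs grs _ _; rewrite -map_flatten map_inj_in_uniq //.
by apply: sub_in2 pts_inj => t /(allP grs).
Qed.

Lemma nil_notin_resolution rs s : resolves rs s -> [::] \notin [seq map pts c | c <- rs].
Proof. by case/and5P=> _ _ _ nrs _; apply/mapP => -[[|t c] crs] //; rewrite crs in nrs. Qed.

Lemma partition_resolution rs s : resolves rs s -> partition [set:: map design rs] (design s).
Proof.
move=> rs_s; have /andP[prs _] := rs_s.
rewrite -(design_perm prs) /design map_flatten resolution_sets_of.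
apply: partition_sets_of; first exact: uniq_flatten_resolution rs_s.
exact: nil_notin_resolution rs_s.
Qed.

Lemma card_resolution_pred rs s (Q : pred {set {set 'I_n}}) : resolves rs s ->
  #|[set C in [set:: map design rs] | Q C]| = count (fun c => Q (design c)) rs.
Proof.
move=> rs_s; rewrite resolution_sets_of card_sets_of_pred ?count_map //.
  exact: uniq_flatten_resolution rs_s.
exact: nil_notin_resolution rs_s.
Qed.

Lemma is_PC_resolution rs s c l : resolves rs s -> c \in rs ->
  is_PC (design c) (pts l) = covers c l.
Proof. by case/and5P=> _ _ _ _ /allP urs /urs; apply: is_PC_design. Qed.

End NatEncoding.

Section Construction.
Local Notation N := (8 * 4 + 2).

Definition stem : seq nat := [:: 32; 33].

Definition groups : seq (seq nat) := [seq [seq k <- iota 0 32 | k %% 4 == j] | j <- iota 0 4].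

Definition shift (k p : nat) : nat := if p < 32 then (p + k) %% 32 else p.

Definition negate (p : nat) : nat := if p < 32 then (32 - p) %% 32 else p.

Definition relabel (f : nat -> nat) (t : seq nat) : seq nat := sort leq (map f t).

Definition base_blocks : seq (seq nat) :=
  [:: [:: 0; 1; 2; 17]; [:: 0; 1; 3; 30]; [:: 0; 1; 4; 5]; [:: 0; 1; 6; 21]; [:: 0; 1; 7; 26];
    [:: 0; 1; 8; 25]; [:: 0; 1; 9; 24]; [:: 0; 1; 10; 11]; [:: 0; 1; 12; 27]; [:: 0; 1; 13; 20];
    [:: 0; 1; 14; 19]; [:: 0; 1; 15; 33]; [:: 0; 1; 18; 32]; [:: 0; 2; 4; 18]; [:: 0; 2; 6; 8];
    [:: 0; 2; 7; 11]; [:: 0; 2; 9; 32]; [:: 0; 2; 10; 24]; [:: 0; 2; 12; 14]; [:: 0; 2; 13; 15];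
    [:: 0; 2; 23; 27]; [:: 0; 2; 25; 33]; [:: 0; 3; 6; 19]; [:: 0; 3; 7; 10]; [:: 0; 3; 8; 11];
    [:: 0; 3; 9; 26]; [:: 0; 3; 12; 15]; [:: 0; 3; 13; 33]; [:: 0; 3; 14; 17]; [:: 0; 3; 22; 32];
    [:: 0; 4; 10; 14]; [:: 0; 4; 13; 23]; [:: 0; 4; 15; 19]; [:: 0; 5; 10; 21]; [:: 0; 5; 11; 32];
    [:: 0; 5; 12; 23]; [:: 0; 5; 13; 24]; [:: 0; 5; 14; 25]; [:: 0; 5; 15; 22]; [:: 0; 5; 26; 33];
    [:: 0; 6; 12; 22]; [:: 0; 6; 14; 20]; [:: 0; 7; 14; 23]].

Definition kts_base : seq (seq (seq nat)) :=
  [:: [:: [:: 1; 16; 31]; [:: 2; 9; 32]; [:: 3; 25; 28]; [:: 4; 7; 29]; [:: 5; 15; 22];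
        [:: 6; 14; 20]; [:: 8; 13; 21]; [:: 10; 17; 27]; [:: 11; 19; 24]; [:: 12; 18; 26];
        [:: 23; 30; 33]];
    [:: [:: 1; 13; 20]; [:: 2; 16; 30]; [:: 3; 9; 26]; [:: 4; 10; 14]; [:: 5; 11; 32];
        [:: 6; 23; 29]; [:: 7; 8; 15]; [:: 12; 19; 31]; [:: 17; 24; 25]; [:: 18; 22; 28];
        [:: 21; 27; 33]];
    [:: [:: 1; 10; 11]; [:: 2; 4; 18]; [:: 3; 16; 29]; [:: 5; 26; 33]; [:: 6; 27; 32];
        [:: 7; 19; 20]; [:: 8; 9; 17]; [:: 12; 13; 25]; [:: 14; 28; 30]; [:: 15; 23; 24];
        [:: 21; 22; 31]];
    [:: [:: 1; 2; 17]; [:: 3; 22; 32]; [:: 4; 13; 23]; [:: 5; 16; 27]; [:: 6; 18; 24];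
        [:: 7; 12; 21]; [:: 8; 14; 26]; [:: 9; 19; 28]; [:: 10; 29; 33]; [:: 11; 20; 25];
        [:: 15; 30; 31]];
    [:: [:: 1; 15; 33]; [:: 2; 19; 21]; [:: 3; 20; 23]; [:: 4; 25; 27]; [:: 5; 7; 28];
        [:: 6; 16; 26]; [:: 8; 10; 18]; [:: 9; 12; 29]; [:: 11; 13; 30]; [:: 14; 22; 24];
        [:: 17; 31; 32]];
    [:: [:: 1; 18; 32]; [:: 2; 23; 27]; [:: 3; 8; 11]; [:: 4; 15; 19]; [:: 5; 9; 30];
        [:: 6; 12; 22]; [:: 7; 16; 25]; [:: 10; 20; 26]; [:: 13; 17; 28]; [:: 14; 31; 33];
        [:: 21; 24; 29]];
    [:: [:: 1; 28; 29]; [:: 2; 12; 14]; [:: 3; 4; 31]; [:: 5; 13; 24]; [:: 6; 11; 33];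
        [:: 7; 17; 22]; [:: 8; 19; 27]; [:: 9; 16; 23]; [:: 10; 15; 25]; [:: 18; 20; 30];
        [:: 21; 26; 32]];
    [:: [:: 1; 4; 5]; [:: 2; 6; 8]; [:: 3; 13; 33]; [:: 7; 14; 23]; [:: 9; 18; 25];
        [:: 10; 16; 22]; [:: 11; 12; 17]; [:: 15; 20; 21]; [:: 19; 29; 32]; [:: 24; 26; 30];
        [:: 27; 28; 31]];
    [:: [:: 1; 9; 24]; [:: 2; 25; 33]; [:: 3; 12; 15]; [:: 4; 22; 26]; [:: 5; 18; 19];
        [:: 6; 10; 28]; [:: 7; 30; 32]; [:: 8; 23; 31]; [:: 11; 16; 21]; [:: 13; 14; 27];
        [:: 17; 20; 29]];
    [:: [:: 1; 7; 26]; [:: 2; 20; 22]; [:: 3; 24; 27]; [:: 4; 9; 11]; [:: 5; 8; 29];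
        [:: 6; 25; 31]; [:: 10; 12; 30]; [:: 13; 16; 19]; [:: 14; 15; 32]; [:: 17; 18; 33];
        [:: 21; 23; 28]];
    [:: [:: 1; 12; 27]; [:: 2; 10; 24]; [:: 3; 6; 19]; [:: 4; 17; 21]; [:: 5; 20; 31];
        [:: 7; 9; 33]; [:: 8; 22; 30]; [:: 11; 15; 28]; [:: 13; 26; 29]; [:: 14; 16; 18];
        [:: 23; 25; 32]];
    [:: [:: 1; 8; 25]; [:: 2; 26; 28]; [:: 3; 18; 21]; [:: 4; 6; 30]; [:: 5; 12; 23];
        [:: 7; 24; 31]; [:: 9; 20; 27]; [:: 10; 13; 32]; [:: 11; 14; 29]; [:: 15; 16; 17];
        [:: 19; 22; 33]];
    [:: [:: 1; 22; 23]; [:: 2; 7; 11]; [:: 3; 14; 17]; [:: 5; 10; 21]; [:: 6; 9; 15];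
        [:: 13; 18; 31]; [:: 19; 25; 26]; [:: 27; 29; 30]];
    [:: [:: 1; 6; 21]; [:: 2; 29; 31]; [:: 3; 7; 10]; [:: 5; 14; 25]; [:: 9; 13; 22];
        [:: 11; 18; 23]; [:: 15; 26; 27]; [:: 17; 19; 30]];
    [:: [:: 1; 14; 19]; [:: 2; 3; 5]; [:: 6; 7; 13]; [:: 9; 10; 31]; [:: 11; 22; 27];
        [:: 15; 18; 29]; [:: 17; 23; 26]; [:: 21; 25; 30]];
    [:: [:: 1; 3; 30]; [:: 2; 13; 15]; [:: 5; 6; 17]; [:: 7; 18; 27]; [:: 9; 14; 21];
        [:: 10; 19; 23]; [:: 11; 26; 31]; [:: 22; 25; 29]]].

Definition kf_base : seq (seq (seq nat)) :=
  [:: [:: [:: 1; 2; 19]; [:: 3; 17; 18]; [:: 5; 7; 14]; [:: 6; 29; 31]; [:: 9; 10; 27];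
        [:: 11; 25; 26]; [:: 13; 15; 22]; [:: 21; 23; 30]];
    [:: [:: 1; 11; 14]; [:: 2; 7; 13]; [:: 3; 6; 25]; [:: 5; 26; 31]; [:: 9; 19; 22];
        [:: 10; 15; 21]; [:: 17; 27; 30]; [:: 18; 23; 29]]].

Definition blocks : seq (seq nat) :=
  [seq relabel (shift k) B | B <- base_blocks, k <- iota 0 32].

Definition forbidden (t : seq nat) : bool := has (fun g => all (mem (stem ++ g)) t) groups.

(* Filtering the blocks through [a] and then through [b] keeps the evaluation fast. *)
Definition triples_ok : bool :=
  all (fun a => let Ba := [seq B <- blocks | a \in B] in
    all (fun b => let Bab := [seq B <- Ba | b \in B] in
      all (fun c => [|| a == b, a == c, b == c |
          count (fun B => c \in B) Bab == (if forbidden [:: a; b; c] then 0 else 1)])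
        (iota 0 N))
      (iota 0 N))
    (iota 0 N).

Definition kts_classes (x : nat) : seq (seq (seq nat)) :=
  [seq map (relabel (shift x)) c | c <- kts_base].

Definition kf_classes32 : seq (seq (seq nat)) :=
  [seq map (relabel (shift k)) c | c <- kf_base, k <- iota 0 8].

Definition kf_classes33 : seq (seq (seq nat)) :=
  [seq map (relabel negate) c | c <- kf_classes32].

Definition kts_certificate (x : nat) (g : seq nat) (rs : seq (seq (seq nat))) : bool :=
  [&& resolves N rs (derived_seq blocks x),
      all (fun c => covers N c (compl N [:: x]) || covers N c (compl N (g ++ stem))) rs,
      count (covers N ^~ (compl N [:: x])) rs == 12 &
      count (covers N ^~ (compl N (g ++ stem))) rs == 4].

Definition kf_certificate (x : nat) (rs : seq (seq (seq nat))) : bool :=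
  resolves N rs (derived_seq blocks x) &&
  all (fun c => has (fun g => covers N c (compl N (stem ++ g))) groups) rs.

Lemma groups_ok :
  [&& uniq (flatten groups), [::] \notin groups, all (all (fun k => k < N)) groups
    & covers N groups (compl N stem)].
Proof. by vm_compute. Qed.

Lemma group_sizes_ok : (size groups == 4) && all (fun g => uniq g && (size g == 8)) groups.
Proof. by vm_compute. Qed.

Lemma blocks_uniq : uniq blocks.
Proof. by vm_compute. Qed.

Lemma blocks_shape : all (fun B => sorted_below N B && (size B == 4)) blocks.
Proof. by vm_compute. Qed.

Lemma triples_ok_holds : triples_ok.
Proof. by vm_compute. Qed.

Lemma kts_certificates_ok :
  all (fun g => all (fun x => kts_certificate x g (kts_classes x)) g) groups.
Proof. by vm_compute. Qed.

Lemma kf_certificates_ok : kf_certificate 32 kf_classes32 && kf_certificate 33 kf_classes33.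
Proof. by vm_compute. Qed.

Lemma count_blocks_triple a b c : a < N -> b < N -> c < N -> a != b -> a != c -> b != c ->
  count (fun B => all (mem B) [:: a; b; c]) blocks = if forbidden [:: a; b; c] then 0 else 1.
Proof.
have /allP ok := triples_ok_holds.
have in_range k : k < N -> k \in iota 0 N by rewrite mem_iota.
move=> /in_range aN /in_range bN /in_range cN ab ac bc.
move: (ok a aN) => /allP /(_ b bN) /allP /(_ c cN).
rewrite (negbTE ab) (negbTE ac) (negbTE bc) !orFb => /eqP <-.
rewrite !count_filter; apply: eq_count => B /=.
by rewrite andbT; case: (a \in B); case: (b \in B); case: (c \in B).
Qed.

Lemma forbiddenE (e : seq 'I_N) :
  [exists Gr in design N groups, [set:: e] \subset pts N stem :|: Gr] = forbidden (map val e).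
Proof.
rewrite /forbidden; apply/existsP/hasP => [[Gr /andP[]] | [g gs]].
  by rewrite inE => /mapP[g gs ->]; rewrite -pts_cat sub_pts => sub; exists g; rewrite ?all_map.
rewrite all_map => sub; exists (pts N g); apply/andP; split; first by rewrite inE map_f.
by rewrite -pts_cat sub_pts.
Qed.

Lemma CQS_construction : is_CQS 8 4 2 (pts N stem) (design N groups) (design N blocks).
Proof.
have /and4P[ug ng bg cg] := groups_ok.
have /andP[/eqP sg /allP gg] := group_sizes_ok.
split.
- by rewrite card_pts.
- by move: cg; rewrite coversE -pts_compl => /eqP <-; apply: partition_design.
- split; first by rewrite card_design.
  move=> Gr; rewrite inE => /mapP[g gs ->]; have /andP[ug' /eqP g8] := gg g gs.
  by rewrite card_pts ?g8 ?(allP bg g gs).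
- move=> b; rewrite inE => /mapP[B /(allP blocks_shape) /andP[/andP[sB bB] /eqP B4] ->].
  by rewrite card_pts ?B4 ?(sorted_uniq ltn_trans ltnn sB).
move=> t /card3_triple[a [b [c [ab ac bc ->]]]].
rewrite forbiddenE (nblocks_design _ blocks_uniq); last first.
  by apply/allP => B /(allP blocks_shape) /andP[].
rewrite (eq_count (a2 := fun B => all (mem B) [:: val a; val b; val c])); last first.
  by move=> B; rewrite sub_pts.
by rewrite count_blocks_triple ?ltn_ord ?val_eqE //; case: forbidden.
Qed.

Lemma KTS_resolution_construction Gr x : Gr \in design N groups -> x \in Gr ->
  exists P, KTS_resolution (N - 1) (8 + 2 - 1) ([set: 'I_N] :\ x)
    ((Gr :|: pts N stem) :\ x) (derived (design N blocks) x) P.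
Proof.
rewrite inE => /mapP[g gs ->]; rewrite in_pts => xg.
have /and4P[rs_x cover_x cY cYH] : kts_certificate (val x) g (kts_classes (val x)).
  by move/allP: kts_certificates_ok => /(_ g gs) /allP; apply.
have YH : ([set: 'I_N] :\ x) :\: ((pts N g :|: pts N stem) :\ x) =
    pts N (compl N (g ++ stem)).
  rewrite pts_compl pts_cat; apply/setP => i.
  rewrite in_setD !in_setD1 in_setT in_setC andbT.
  by case: (eqVneq i x) => [-> | _] /=; rewrite ?andbT // in_setU in_pts xg.
have Y : [set: 'I_N] :\ x = pts N (compl N [:: val x]) by rewrite pts_compl pts1 setTD.
exists [set:: map (design N) (kts_classes (val x))]; split.
- by rewrite derived_design; apply: partition_resolution rs_x.
- move=> C; rewrite inE => /mapP[c cs ->].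
  by rewrite YH Y !(is_PC_resolution _ rs_x cs); apply/orP/(allP cover_x).
- rewrite Y (card_resolution_pred _ rs_x); apply: etrans (eqP cY).
  by apply: eq_in_count => c cs; rewrite (is_PC_resolution _ rs_x cs).
rewrite YH (card_resolution_pred _ rs_x); apply: etrans (eqP cYH).
by apply: eq_in_count => c cs; rewrite (is_PC_resolution _ rs_x cs).
Qed.

Lemma KF_resolution_construction x : x \in pts N stem ->
  exists P, KF_resolution (design N groups) (~: pts N stem) (derived (design N blocks) x) P.
Proof.
rewrite in_pts => xS.
have [rs /andP[rs_x cls]] : exists rs, kf_certificate (val x) rs.
  have /andP[k32 k33] := kf_certificates_ok.
  by move: xS; rewrite !inE => /orP[] /eqP ->; [exists kf_classes32 | exists kf_classes33].
exists [set:: map (design N) rs]; split.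
  by rewrite derived_design; apply: partition_resolution rs_x.
move=> C; rewrite inE => /mapP[c cs ->].
have /hasP[g gs cg] := allP cls c cs.
exists (pts N g); first by rewrite inE map_f.
have -> : ~: pts N stem :\: pts N g = pts N (compl N (stem ++ g)).
  by rewrite pts_compl pts_cat setCU setDE.
by rewrite (is_PC_resolution _ rs_x cs).
Qed.

End Construction.

Theorem lemma3p1 :
  exists (S : {set 'I_(8 * 4 + 2)}) (G A : {set {set 'I_(8 * 4 + 2)}}),
    is_RDCQS 8 4 2 S G A.
Proof.
exists (pts _ stem), (design _ groups), (design _ blocks).
apply: (RDCQS_of_resolutions CQS_construction) => //.
- exact: KTS_resolution_construction.
- exact: KF_resolution_construction.
Qed.
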